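(* Fix $a, b > 0$, $\delta_1, \delta_2 > 0$, $0 < x < 1$, and $\varepsilon_{2,1}, \varepsilon_{2,2} > 0$. Let $l_1$ be a positive integer such that $$1 - e^{-\delta_2}\sum_{l=0}^{l_1-1}\frac{\delta_2^l}{l!} < \varepsilon_{2,1}.$$ For each $l = 0, 1, \dots, l_1-1$, let $m_l$ be a nonnegative integer such that $$e^{-\delta_2}\frac{\delta_2^l}{l!}\Big(1 - e^{-\delta_1}\sum_{j=0}^{m_l-1}\frac{\delta_1^j}{j!}\Big) < \varepsilon_{2,2}.$$ Define the truncated sum $\hat B = \sum_{l=0}^{l_1-1}\sum_{j=0}^{m_l-1} L_{j,l}$. Define $$U2_{a,b}^{\delta_1,\delta_2}(x) = 1 - e^{-(\delta_1+\delta_2)}\sum_{l=0}^{l_1-1}\frac{\delta_2^l}{l!}\sum_{j=0}^{m_l-1}\frac{\delta_1^j}{j!}.$$ Then $$B_{a,b}^{\delta_1,\delta_2}(x) - \hat B < U2_{a,b}^{\delta_1,\delta_2}(x) < \varepsilon_{2,1} + l_1\varepsilon_{2,2}.$$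
   Context: For $p, q > 0$, $I_x(p,q) = \frac{\int_0^x t^{p-1}(1-t)^{q-1}\,dt}{B(p,q)}$ is the regularized incomplete beta function, where $B(p,q) = \Gamma(p)\Gamma(q)/\Gamma(p+q)$. The CDF of the doubly non-central beta distribution with parameters $a, b$ and $\delta_1, \delta_2$ is $$B_{a,b}^{\delta_1,\delta_2}(x) = \sum_{j=0}^\infty\sum_{l=0}^\infty L_{j,l}, \qquad L_{j,l} = e^{-(\delta_1+\delta_2)}\frac{\delta_1^j\delta_2^l}{j!\,l!}\,I_x(j+a, l+b).$$ Empty sums are zero. *)

From Stdlib Require Import Reals Arith Factorial.
From Coquelicot Require Import Coquelicot.
Open Scope R_scope.

Fixpoint fsum (n : nat) (f : nat -> R) : R :=
  match n with
  | O => 0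
  | S n' => fsum n' f + f n'
  end.

Definition Gamma (s : R) : R :=
  RInt_gen (fun t => Rpower t (s - 1) * exp (- t)) (at_right 0) (Rbar_locally p_infty).

Definition Beta (p q : R) : R := Gamma p * Gamma q / Gamma (p + q).

(* regularized incomplete beta I_x(p,q) = (int_0^x t^(p-1)(1-t)^(q-1) dt) / B(p,q),
   the integral being improper at 0 (integrand may be singular there) *)
Definition Ireg (x p q : R) : R :=
  RInt_gen (fun t => Rpower t (p - 1) * Rpower (1 - t) (q - 1)) (at_right 0) (at_point x)
  / Beta p q.

Definition Lterm (a b d1 d2 x : R) (j l : nat) : R :=
  exp (- (d1 + d2)) * (d1 ^ j * d2 ^ l) / (INR (fact j) * INR (fact l))
  * Ireg x (INR j + a) (INR l + b).

Definition dncbeta_cdf (a b d1 d2 x : R) : R :=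
  Series (fun j => Series (fun l => Lterm a b d1 d2 x j l)).

(* Write [L_{j,l} = w_{j,l} I_x(j + a, l + b)] with the product Poisson weights
   [w_{j,l} = e^{-d1} d1^j / j! * e^{-d2} d2^l / l!], whose double series sums to 1.
   Then [U2] is the [w]-mass of the indices omitted by the truncation and [B - Bhat]
   is the [L]-mass of the same indices, which is strictly smaller because
   [0 <= I_x < 1].  For [x < x' < 1] we have [I_x < I_x' <= 1], the last inequality
   being the Fubini computation [Gamma p * Gamma q = Gamma (p + q) * Beta p q],
   carried out on compact boxes because [Gamma] is an improper integral.  Finally
   [U2] is the Poisson([d2]) tail beyond [l1] plus, for each [l < l1], the
   Poisson([d2]) probability of [l] times the Poisson([d1]) tail beyond [m l]. *)

From Stdlib Require Import Reals Arith Factorial.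
From Coquelicot Require Import Coquelicot.
From Stdlib Require Import Lra Lia Classical.
Open Scope R_scope.

(** * Parametric integrals and Fubini on rectangles *)

Lemma continuous_of_eps_delta (f : R -> R) x :
  (forall eps : posreal, exists d : posreal,
     forall y, Rabs (y - x) < d -> Rabs (f y - f x) < eps) ->
  continuous f x.
Proof.
intros H. apply continuity_pt_filterlim. intros eps Heps.
destruct (H (mkposreal eps Heps)) as [d Hd].
exists d. split; [apply cond_pos |]. intros y [_ Hy]. now apply Hd.
Qed.

Lemma continuity_2d_pt_continuous_l f x y :
  continuity_2d_pt f x y -> continuous (fun u => f u y) x.
Proof.
intros H. apply continuous_of_eps_delta. intros eps. destruct (H eps) as [d Hd].
exists d. intros u Hu. apply Hd; [exact Hu |]. rewrite Rminus_eq_0, Rabs_R0. apply cond_pos.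
Qed.

Lemma continuity_2d_pt_continuous_r f x y :
  continuity_2d_pt f x y -> continuous (fun v => f x v) y.
Proof.
intros H. apply continuous_of_eps_delta. intros eps. destruct (H eps) as [d Hd].
exists d. intros v Hv. apply Hd; [|exact Hv]. rewrite Rminus_eq_0, Rabs_R0. apply cond_pos.
Qed.

Lemma continuity_2d_pt_swap f x y :
  continuity_2d_pt f x y -> continuity_2d_pt (fun u v => f v u) y x.
Proof. intros H eps. destruct (H eps) as [d Hd]. exists d. intros u v Hu Hv. now apply Hd. Qed.

Lemma continuity_2d_pt_lift_l (g : R -> R) x y :
  continuous g x -> continuity_2d_pt (fun u _ => g u) x y.
Proof.
intros H. apply (continuity_1d_2d_pt_comp g (fun u _ => u)).
- now apply continuity_pt_filterlim.
- apply continuity_2d_pt_id1.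
Qed.

Lemma continuity_2d_pt_lift_r (g : R -> R) x y :
  continuous g y -> continuity_2d_pt (fun _ v => g v) x y.
Proof.
intros H. apply (continuity_1d_2d_pt_comp g (fun _ v => v)).
- now apply continuity_pt_filterlim.
- apply continuity_2d_pt_id2.
Qed.

Lemma ex_RInt_continuous_le (f : R -> R) a b : a <= b ->
  (forall x, a <= x <= b -> continuous f x) -> ex_RInt f a b.
Proof.
intros Hab Hf. apply (ex_RInt_continuous (V := R_CompleteNormedModule)).
intros x Hx. rewrite Rmin_left, Rmax_right in Hx by lra. now apply Hf.
Qed.

Lemma RInt_ext_le (f g : R -> R) a b : a <= b ->
  (forall x, a <= x <= b -> f x = g x) -> RInt f a b = RInt g a b.
Proof.
intros Hab H. apply RInt_ext. intros x Hx. rewrite Rmin_left, Rmax_right in Hx by lra.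
apply H; lra.
Qed.

Lemma RInt_scal_l (f : R -> R) c a b : a <= b ->
  (forall x, a <= x <= b -> continuous f x) ->
  RInt (fun x => c * f x) a b = c * RInt f a b.
Proof.
intros Hab Hf. apply (RInt_scal (V := R_CompleteNormedModule)).
now apply ex_RInt_continuous_le.
Qed.

Lemma continuous_RInt_param_le (g : R -> R -> R) a b y0 : a <= b ->
  (forall x y, continuity_2d_pt g x y) ->
  continuous (fun y => RInt (fun x => g x y) a b) y0.
Proof.
intros Hab Hg. apply continuous_of_eps_delta. intros eps.
assert (Heps' : 0 < eps / (b - a + 1)) by (apply Rdiv_lt_0_compat; [apply cond_pos | lra]).
destruct (uniform_continuity_2d_1d g a b y0 (fun x _ => Hg x y0) (mkposreal _ Heps'))
  as [d Hd].
exists d. intros y Hy.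
assert (Hex : forall v, ex_RInt (fun x => g x v) a b).
{ intros v. apply ex_RInt_continuous_le; [exact Hab |].
  intros x _. apply continuity_2d_pt_continuous_l, Hg. }
replace (RInt (fun x => g x y) a b - RInt (fun x => g x y0) a b)
  with (RInt (fun x => g x y - g x y0) a b)
  by exact (RInt_minus (V := R_CompleteNormedModule) _ _ a b (Hex y) (Hex y0)).
apply Rle_lt_trans with ((b - a) * (eps / (b - a + 1))).
- apply abs_RInt_le_const; [exact Hab | now apply (ex_RInt_minus (V := R_NormedModule)) |].
  intros t Ht. apply Rlt_le. pose proof (cond_pos d). apply Rabs_lt_between' in Hy.
  apply Hd; try lra. rewrite Rminus_eq_0, Rabs_R0. apply cond_pos.
- pose proof (cond_pos eps).
  apply (Rmult_lt_reg_r (b - a + 1)); [lra |].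
  field_simplify; lra.
Qed.

Lemma continuous_RInt_param (g : R -> R -> R) a b y0 :
  (forall x y, continuity_2d_pt g x y) ->
  continuous (fun y => RInt (fun x => g x y) a b) y0.
Proof.
intros Hg. destruct (Rle_dec a b) as [Hab | Hba].
- now apply continuous_RInt_param_le.
- apply (continuous_ext (fun y => - RInt (fun x => g x y) b a)).
  + intros y. apply (opp_RInt_swap (V := R_CompleteNormedModule)).
    apply ex_RInt_continuous_le; [lra |].
    intros x _. apply continuity_2d_pt_continuous_l, Hg.
  + apply (continuous_opp (V := R_NormedModule) (fun y => RInt (fun x => g x y) b a)).
    apply continuous_RInt_param_le; [lra | exact Hg].
Qed.

(* [z |-> int_c^d int_a^z f] has derivative [int_c^d f(z, .)] by differentiation
   under the integral sign, so the fundamental theorem of calculus swaps the order. *)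
Lemma RInt_swap_continuous (f : R -> R -> R) a b c d :
  (forall x y, continuity_2d_pt f x y) ->
  RInt (fun x => RInt (fun y => f x y) c d) a b
  = RInt (fun y => RInt (fun x => f x y) a b) c d.
Proof.
intros Hf.
set (Phi z := RInt (fun y => RInt (fun x => f x y) a z) c d).
assert (Hinner : forall y z, is_derive (fun u => RInt (fun x => f x y) a u) z (f z y)).
{ intros y z. apply (is_derive_RInt (V := R_NormedModule) (fun x => f x y) _ a).
  - apply filter_forall. intros u. apply (RInt_correct (V := R_CompleteNormedModule)).
    apply (ex_RInt_continuous (V := R_CompleteNormedModule)).
    intros w _. apply continuity_2d_pt_continuous_l, Hf.
  - apply continuity_2d_pt_continuous_l, Hf. }
assert (HPhi : forall z, is_derive Phi z (RInt (fun y => f z y) c d)).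
{ intros z.
  assert (H := is_derive_RInt_param (fun z y => RInt (fun x => f x y) a z) c d z).
  rewrite (RInt_ext (fun y => Derive (fun u => RInt (fun x => f x y) a u) z) (fun y => f z y))
    in H by (intros y _; apply is_derive_unique, Hinner).
  apply H.
  - apply filter_forall. intros u y _. eexists. apply Hinner.
  - intros y _. apply continuity_2d_pt_ext with (f := f); [| apply Hf].
    intros; symmetry; apply is_derive_unique, Hinner.
  - apply filter_forall. intros u. apply (ex_RInt_continuous (V := R_CompleteNormedModule)).
    intros w _. now apply continuous_RInt_param. }
assert (HR := is_RInt_derive Phi _ a b (fun z _ => HPhi z)
  (fun z _ => continuous_RInt_param (fun y z => f z y) c d z
                (fun u v => continuity_2d_pt_swap f v u (Hf v u)))).
rewrite (is_RInt_unique _ _ _ _ HR). unfold Phi.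
rewrite (RInt_ext (fun y => RInt (fun x => f x y) a a) (fun _ => 0))
  by (intros; apply (RInt_point (V := R_CompleteNormedModule))).
rewrite RInt_const. unfold minus, plus, opp, scal; simpl. unfold mult; simpl. ring.
Qed.

Definition clamp (lo hi x : R) : R := Rmax lo (Rmin hi x).

Lemma clamp_Rabs_le lo hi x y : Rabs (clamp lo hi x - clamp lo hi y) <= Rabs (x - y).
Proof.
unfold clamp, Rmax, Rmin. repeat destruct Rle_dec; unfold Rabs; repeat destruct Rcase_abs; lra.
Qed.

Lemma clamp_id lo hi x : lo <= x <= hi -> clamp lo hi x = x.
Proof. intros. unfold clamp, Rmax, Rmin. repeat destruct Rle_dec; lra. Qed.

Lemma clamp_in lo hi x : lo <= hi -> lo <= clamp lo hi x <= hi.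
Proof. intros. unfold clamp, Rmax, Rmin. repeat destruct Rle_dec; lra. Qed.

Section Rectangle.

Variables (f : R -> R -> R) (a b c d : R).
Hypotheses (Hab : a <= b) (Hcd : c <= d).
Hypothesis Hf : forall x y, a <= x <= b -> c <= y <= d -> continuity_2d_pt f x y.

(* Clamping extends [f] from the rectangle to a function continuous everywhere. *)
Let g x y := f (clamp a b x) (clamp c d y).

Let g_continuous x y : continuity_2d_pt g x y.
Proof.
intros eps.
destruct (Hf (clamp a b x) (clamp c d y) (clamp_in _ _ _ Hab) (clamp_in _ _ _ Hcd) eps)
  as [del Hdel].
exists del. intros u v Hu Hv. apply Hdel.
- eapply Rle_lt_trans; [apply clamp_Rabs_le | exact Hu].
- eapply Rle_lt_trans; [apply clamp_Rabs_le | exact Hv].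
Qed.

Let RInt_g_l y : c <= y <= d ->
  RInt (fun x => g x y) a b = RInt (fun x => f x y) a b.
Proof.
intros Hy. apply RInt_ext_le; [exact Hab |]. intros x Hx. unfold g. now rewrite !clamp_id.
Qed.

Let RInt_g_r x : a <= x <= b ->
  RInt (fun y => g x y) c d = RInt (fun y => f x y) c d.
Proof.
intros Hx. apply RInt_ext_le; [exact Hcd |]. intros y Hy. unfold g. now rewrite !clamp_id.
Qed.

Lemma ex_RInt_RInt_param_rect : ex_RInt (fun y => RInt (fun x => f x y) a b) c d.
Proof.
apply (ex_RInt_ext (V := R_NormedModule) (fun y => RInt (fun x => g x y) a b)).
- intros y Hy. rewrite Rmin_left, Rmax_right in Hy by lra. apply RInt_g_l. lra.
- apply ex_RInt_continuous_le; [exact Hcd |].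
  intros y _. apply continuous_RInt_param, g_continuous.
Qed.

Lemma RInt_swap_rect :
  RInt (fun x => RInt (fun y => f x y) c d) a b
  = RInt (fun y => RInt (fun x => f x y) a b) c d.
Proof.
rewrite <- (RInt_ext_le _ _ a b Hab RInt_g_r), <- (RInt_ext_le _ _ c d Hcd RInt_g_l).
apply RInt_swap_continuous, g_continuous.
Qed.

End Rectangle.

Lemma RInt_subinterval_le (f : R -> R) a a' b' b : a <= a' -> a' <= b' -> b' <= b ->
  (forall x, a <= x <= b -> continuous f x) -> (forall x, a < x < b -> 0 <= f x) ->
  RInt f a' b' <= RInt f a b.
Proof.
intros Ha Hab' Hb Hc Hpos.
assert (Hex : forall u v, a <= u -> u <= v -> v <= b -> ex_RInt f u v).
{ intros u v Hu Huv Hv. apply ex_RInt_continuous_le; [exact Huv |]. intros; apply Hc; lra. }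
assert (Hnn : forall u v, a <= u -> u <= v -> v <= b -> 0 <= RInt f u v).
{ intros u v Hu Huv Hv. apply RInt_ge_0; auto. intros; apply Hpos; lra. }
rewrite <- (RInt_Chasles (V := R_CompleteNormedModule) f a a' b) by (apply Hex; lra).
rewrite <- (RInt_Chasles (V := R_CompleteNormedModule) f a' b' b) by (apply Hex; lra).
unfold plus; simpl.
pose proof (Hnn a a'). pose proof (Hnn b' b). lra.
Qed.

Lemma completeness_approx (E : R -> Prop) M :
  (exists y, E y) -> (forall y, E y -> y <= M) ->
  exists L, (forall y, E y -> y <= L) /\ (forall e, 0 < e -> exists y, E y /\ L - e < y).
Proof.
intros Hne Hb.
destruct (completeness E) as [L [HL1 HL2]]; [now exists M | exact Hne |].
exists L. split; [exact HL1 |].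
intros e He. apply NNPP. intros Hn.
enough (L <= L - e) by lra.
apply HL2. intros y Hy. apply Rnot_lt_le. intros Hlt. apply Hn. now exists y.
Qed.

Lemma is_RInt_gen_sup (f : R -> R) (Fa Fb : (R -> Prop) -> Prop)
  {FFa : Filter Fa} {FFb : Filter Fb} (D : R -> R -> Prop) M :
  (exists a b, D a b) ->
  (forall a b, D a b -> ex_RInt f a b) ->
  (forall a b, D a b -> RInt f a b <= M) ->
  (forall a b, D a b -> filter_prod Fa Fb
     (fun uv => D (fst uv) (snd uv) /\ RInt f a b <= RInt f (fst uv) (snd uv))) ->
  exists L, is_RInt_gen f Fa Fb L /\
    (forall a b, D a b -> RInt f a b <= L) /\
    (forall e, 0 < e -> exists a b, D a b /\ L - e < RInt f a b).
Proof.
intros [a0 [b0 HD0]] Hex HM Hev.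
destruct (completeness_approx (fun y => exists a b, D a b /\ y = RInt f a b) M)
  as [L [HL1 HL2]].
{ now exists (RInt f a0 b0), a0, b0. }
{ intros y [a [b [HD ->]]]. now apply HM. }
assert (Hle : forall a b, D a b -> RInt f a b <= L) by (intros a b HD; apply HL1; now exists a, b).
assert (Happ : forall e, 0 < e -> exists a b, D a b /\ L - e < RInt f a b).
{ intros e He. destruct (HL2 e He) as [y [[a [b [HD ->]]] Hy]]. now exists a, b. }
exists L. repeat split; [| exact Hle | exact Happ].
intros P [eps HP].
destruct (Happ eps (cond_pos eps)) as [a [b [HD Hlt]]].
apply (filter_imp (F := filter_prod Fa Fb)) with (2 := Hev a b HD).
intros [u v] [HD' Huv]. simpl in *.
exists (RInt f u v). split.
- apply (RInt_correct (V := R_CompleteNormedModule)). now apply Hex.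
- apply HP. unfold ball; simpl. unfold AbsRing_ball, abs, minus, plus, opp; simpl.
  specialize (Hle u v HD'). unfold Rabs; destruct Rcase_abs; lra.
Qed.

Lemma at_right_0_interval r : 0 < r -> at_right 0 (fun a => 0 < a /\ a <= r).
Proof.
intros Hr. exists (mkposreal r Hr). intros y Hy Hy0. simpl in *.
unfold ball in Hy; simpl in Hy. unfold AbsRing_ball, abs, minus, plus, opp in Hy; simpl in Hy.
rewrite Ropp_0, Rplus_0_r in Hy. unfold Rabs in Hy; destruct Rcase_abs in Hy; lra.
Qed.

Lemma Rmult_le_of_approx (A B C : R) (P Q : R -> Prop) :
  0 <= B ->
  (forall e, 0 < e -> exists u, P u /\ A - e < u) ->
  (forall e, 0 < e -> exists v, Q v /\ B - e < v) ->
  (forall u, P u -> 0 <= u) -> (forall v, Q v -> 0 <= v) ->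
  (forall u v, P u -> Q v -> u * v <= C) ->
  A * B <= C.
Proof.
intros HB HA HQ HP0 HQ0 HC.
assert (HuB : forall u, P u -> u * B <= C).
{ intros u Hu. apply Rle_plus_epsilon. intros e He. pose proof (HP0 u Hu).
  destruct (HQ (e / (u + 1))) as [v [Hv Hlt]]; [apply Rdiv_lt_0_compat; lra |].
  specialize (HC u v Hu Hv).
  assert (u * (B - e / (u + 1)) <= u * v) by (apply Rmult_le_compat_l; lra).
  assert (u * (e / (u + 1)) <= e) by (apply (Rmult_le_reg_r (u + 1)); [lra | field_simplify; nra]).
  nra. }
apply Rle_plus_epsilon. intros e He.
destruct (HA (e / (B + 1))) as [u [Hu Hlt]]; [apply Rdiv_lt_0_compat; lra |].
specialize (HuB u Hu).
assert ((A - e / (B + 1)) * B <= u * B) by (apply Rmult_le_compat_r; lra).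
assert (e / (B + 1) * B <= e) by (apply (Rmult_le_reg_r (B + 1)); [lra | field_simplify; nra]).
nra.
Qed.

(** * Powers and exponentials *)

Lemma continuous_of_ex_derive (f : R -> R) x : ex_derive f x -> continuous f x.
Proof. exact (ex_derive_continuous (K := R_AbsRing) (V := R_NormedModule) f x). Qed.

Lemma Rpower_pos x c : 0 < Rpower x c.
Proof. apply exp_pos. Qed.

Lemma Rpower_1_l c : Rpower 1 c = 1.
Proof. unfold Rpower. now rewrite ln_1, Rmult_0_r, exp_0. Qed.

Lemma ex_derive_Rpower c t : 0 < t -> ex_derive (fun x => Rpower x c) t.
Proof.
intros Ht. exists (c * Rpower t (c - 1)). now apply is_derive_Reals, derivable_pt_lim_power.
Qed.

Lemma continuous_Rpower c t : 0 < t -> continuous (fun x => Rpower x c) t.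
Proof. intros Ht. now apply continuous_of_ex_derive, ex_derive_Rpower. Qed.

Lemma RInt_Rpower c a b : 0 < c -> 0 < a -> a <= b ->
  RInt (fun t => Rpower t (c - 1)) a b = (Rpower b c - Rpower a c) / c.
Proof.
intros Hc Ha Hab. apply is_RInt_unique.
replace ((Rpower b c - Rpower a c) / c) with (minus (Rpower b c / c) (Rpower a c / c))
  by (unfold minus, plus, opp; simpl; field; lra).
apply (is_RInt_derive (V := R_CompleteNormedModule) (fun t => Rpower t c / c));
  intros x Hx; rewrite Rmin_left in Hx by lra.
- replace (Rpower x (c - 1)) with (/ c * (c * Rpower x (c - 1))) by (field; lra).
  apply is_derive_Reals, (derivable_pt_lim_ext (fun t => / c * Rpower t c));
    [intros; unfold Rdiv; ring |].
  apply derivable_pt_lim_scal, derivable_pt_lim_power. lra.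
- apply continuous_Rpower. lra.
Qed.

Lemma pow_div_fact_le_exp x n : 0 <= x -> x ^ n / INR (fact n) <= exp x.
Proof.
intros Hx. eapply Rle_trans; [| now apply (exp_ge_taylor x n)].
destruct n as [| n]; [simpl; lra |].
rewrite tech5.
enough (0 <= sum_f_R0 (fun k => x ^ k / INR (fact k)) n) by lra.
apply cond_pos_sum. intros k.
apply Rdiv_le_0_compat; [now apply pow_le | apply lt_0_INR, lt_O_fact].
Qed.

(** * The Gamma function *)

Definition gamma_integrand (s t : R) : R := Rpower t (s - 1) * exp (- t).

Lemma gamma_integrand_pos s t : 0 < gamma_integrand s t.
Proof. apply Rmult_lt_0_compat; [apply Rpower_pos | apply exp_pos]. Qed.

Lemma continuous_gamma_integrand s t : 0 < t -> continuous (gamma_integrand s) t.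
Proof.
intros Ht. apply continuous_of_ex_derive. unfold gamma_integrand.
auto_derive. now apply ex_derive_Rpower.
Qed.

Lemma gamma_integrand_le_Rpower s t : 0 < t <= 1 -> gamma_integrand s t <= Rpower t (s - 1).
Proof.
intros Ht. unfold gamma_integrand. pose proof (Rpower_pos t (s - 1)).
assert (exp (- t) <= 1) by (rewrite <- exp_0; left; apply exp_increasing; lra).
nra.
Qed.

(* [t^n <= n! 2^n e^(t/2)] is one term of the exponential series of [t/2]. *)
Lemma gamma_integrand_le_exp_half s n t : s - 1 <= INR n -> 1 <= t ->
  gamma_integrand s t <= INR (fact n) * 2 ^ n * exp (- t / 2).
Proof.
intros Hn Ht. unfold gamma_integrand.
assert (Hpow : Rpower t (s - 1) <= t ^ n) by (rewrite <- Rpower_pow by lra; now apply Rle_Rpower).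
assert (Hfact : 0 < INR (fact n)) by apply lt_0_INR, lt_O_fact.
assert (H2n : 0 < 2 ^ n) by (apply pow_lt; lra).
assert (Hexp : t ^ n <= INR (fact n) * 2 ^ n * exp (t / 2)).
{ replace (t ^ n) with (INR (fact n) * 2 ^ n * ((t / 2) ^ n / INR (fact n)))
    by (unfold Rdiv; rewrite Rpow_mult_distr, pow_inv; field; lra).
  apply Rmult_le_compat_l; [nra | apply pow_div_fact_le_exp; lra]. }
replace (exp (- t / 2)) with (exp (t / 2) * exp (- t)) by (rewrite <- exp_plus; f_equal; field).
pose proof (exp_pos (- t)). pose proof (Rpower_pos t (s - 1)). nra.
Qed.

Lemma RInt_exp_half_le b : 1 <= b -> RInt (fun t => exp (- t / 2)) 1 b <= 2.
Proof.
intros Hb.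
assert (HR := is_RInt_derive (V := R_CompleteNormedModule)
  (fun t => -2 * exp (- t / 2)) (fun t => exp (- t / 2)) 1 b).
rewrite (is_RInt_unique _ _ _ _ (HR
  ltac:(intros x _; auto_derive; [easy | unfold Rdiv; field])
  ltac:(intros x _; apply continuous_of_ex_derive; auto_derive; easy))).
unfold minus, plus, opp; simpl.
pose proof (exp_pos (- b / 2)). pose proof (exp_increasing (- (1) / 2) 0 ltac:(lra)).
rewrite exp_0 in *. lra.
Qed.

Lemma RInt_gamma_integrand_bounded s : 0 < s ->
  exists M, forall a b, 0 < a -> a <= b -> RInt (gamma_integrand s) a b <= M.
Proof.
intros Hs. destruct (INR_unbounded (s - 1)) as [n Hn].
set (K := INR (fact n) * 2 ^ n).
assert (HK : 0 < K) by (apply Rmult_lt_0_compat; [apply lt_0_INR, lt_O_fact | apply pow_lt; lra]).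
exists (1 / s + K * 2). intros a b Ha Hab.
set (a' := Rmin a 1). set (b' := Rmax b 1).
assert (Ha' : 0 < a' <= a /\ a' <= 1) by (unfold a', Rmin; destruct Rle_dec; lra).
assert (Hb' : b <= b' /\ 1 <= b') by (unfold b', Rmax; destruct Rle_dec; lra).
assert (Hc : forall x, 0 < x -> continuous (gamma_integrand s) x)
  by (intros; now apply continuous_gamma_integrand).
assert (Hex : forall u v, 0 < u -> u <= v -> ex_RInt (gamma_integrand s) u v).
{ intros u v Hu Huv. apply ex_RInt_continuous_le; [exact Huv |]. intros; apply Hc; lra. }
apply Rle_trans with (RInt (gamma_integrand s) a' b').
{ apply RInt_subinterval_le; try lra.
  - intros x Hx. apply Hc. lra.
  - intros x _. left. apply gamma_integrand_pos. }
rewrite <- (RInt_Chasles (V := R_CompleteNormedModule) _ a' 1 b') by (apply Hex; lra).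
unfold plus; simpl. apply Rplus_le_compat.
- apply Rle_trans with (RInt (fun t => Rpower t (s - 1)) a' 1).
  + apply RInt_le; try lra; [apply Hex; lra | |].
    * apply ex_RInt_continuous_le; [lra |]. intros; apply continuous_Rpower; lra.
    * intros x Hx. apply gamma_integrand_le_Rpower. lra.
  + rewrite RInt_Rpower, Rpower_1_l by lra. pose proof (Rpower_pos a' s).
    unfold Rdiv. apply Rmult_le_compat_r; [left; now apply Rinv_0_lt_compat | lra].
- apply Rle_trans with (RInt (fun t => K * exp (- t / 2)) 1 b').
  + apply RInt_le; try lra; [apply Hex; lra | |].
    * apply ex_RInt_continuous_le; [lra |].
      intros; apply continuous_of_ex_derive; auto_derive; easy.
    * intros x Hx. apply gamma_integrand_le_exp_half; lra.
  + rewrite RInt_scal_l by (lra || (intros; apply continuous_of_ex_derive; auto_derive; easy)).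
    apply Rmult_le_compat_l; [lra | apply RInt_exp_half_le; lra].
Qed.

Lemma Gamma_sup s : 0 < s ->
  (forall a b, 0 < a -> a <= b -> RInt (gamma_integrand s) a b <= Gamma s) /\
  (forall e, 0 < e ->
     exists a b, (0 < a /\ a <= b) /\ Gamma s - e < RInt (gamma_integrand s) a b).
Proof.
intros Hs. destruct (RInt_gamma_integrand_bounded s Hs) as [M HM].
destruct (is_RInt_gen_sup (gamma_integrand s) (at_right 0) (Rbar_locally p_infty)
  (fun a b => 0 < a /\ a <= b) M) as [L [HL [Hle Happ]]].
- exists 1, 1. lra.
- intros a b [Ha Hab]. apply ex_RInt_continuous_le; [exact Hab |].
  intros; apply continuous_gamma_integrand; lra.
- intros a b [Ha Hab]. now apply HM.
- intros a b [Ha Hab].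
  apply (Filter_prod _ _ _ (fun u => 0 < u /\ u <= a) (fun v => b <= v));
    [now apply at_right_0_interval | exists b; intros; lra |].
  intros u v Hu Hv. simpl. split; [lra |].
  apply RInt_subinterval_le; try lra.
  + intros; apply continuous_gamma_integrand; lra.
  + intros; left; apply gamma_integrand_pos.
- replace (Gamma s) with L by (symmetry; exact (is_RInt_gen_unique _ _ HL)).
  split; [intros a b Ha Hab; now apply Hle | exact Happ].
Qed.

Lemma Gamma_pos s : 0 < s -> 0 < Gamma s.
Proof.
intros Hs. apply Rlt_le_trans with (RInt (gamma_integrand s) 1 2); [| apply Gamma_sup; lra].
apply RInt_gt_0; [lra | intros; apply gamma_integrand_pos |].
intros; apply continuous_gamma_integrand; lra.
Qed.

(** * The incomplete beta integral *)

Definition beta_integrand (p q t : R) : R := Rpower t (p - 1) * Rpower (1 - t) (q - 1).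

Definition incbeta_integral (x p q : R) : R :=
  RInt_gen (beta_integrand p q) (at_right 0) (at_point x).

Lemma beta_integrand_pos p q t : 0 < beta_integrand p q t.
Proof. apply Rmult_lt_0_compat; apply Rpower_pos. Qed.

Lemma continuous_beta_integrand p q t : 0 < t < 1 -> continuous (beta_integrand p q) t.
Proof.
intros Ht. apply continuous_of_ex_derive. unfold beta_integrand.
auto_derive. repeat split; apply ex_derive_Rpower; lra.
Qed.

Lemma Rpower_one_minus_le x q t : 0 < t <= x -> x < 1 ->
  Rpower (1 - t) (q - 1) <= 1 + Rpower (1 - x) (q - 1).
Proof.
intros Ht Hx. pose proof (Rpower_pos (1 - x) (q - 1)).
destruct (Rle_dec 0 (q - 1)) as [Hq | Hq].
- assert (Rpower (1 - t) (q - 1) <= Rpower 1 (q - 1)) by (apply Rle_Rpower_l; lra).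
  rewrite Rpower_1_l in *. lra.
- replace (q - 1) with (- (1 - q)) by ring. rewrite !Rpower_Ropp.
  assert (Rpower (1 - x) (1 - q) <= Rpower (1 - t) (1 - q)) by (apply Rle_Rpower_l; lra).
  pose proof (Rpower_pos (1 - x) (1 - q)).
  assert (/ Rpower (1 - t) (1 - q) <= / Rpower (1 - x) (1 - q)) by (apply Rinv_le_contravar; lra).
  pose proof (Rinv_0_lt_compat _ (Rpower_pos (1 - x) (1 - q))). lra.
Qed.

Lemma RInt_beta_integrand_bounded x p q : 0 < x < 1 -> 0 < p ->
  exists M, forall a, 0 < a -> a <= x -> RInt (beta_integrand p q) a x <= M.
Proof.
intros Hx Hp. set (K := 1 + Rpower (1 - x) (q - 1)).
assert (HK : 0 < K) by (unfold K; pose proof (Rpower_pos (1 - x) (q - 1)); lra).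
exists (K * (Rpower x p / p)). intros a Ha Hax.
apply Rle_trans with (RInt (fun t => K * Rpower t (p - 1)) a x).
- apply RInt_le; [exact Hax | | |].
  + apply ex_RInt_continuous_le; [exact Hax |].
    intros; apply continuous_beta_integrand; lra.
  + apply ex_RInt_continuous_le; [exact Hax |].
    intros; apply continuous_of_ex_derive; auto_derive; apply ex_derive_Rpower; lra.
  + intros t Ht. unfold beta_integrand. pose proof (Rpower_pos t (p - 1)).
    assert (Rpower (1 - t) (q - 1) <= K) by (apply Rpower_one_minus_le; lra). nra.
- rewrite RInt_scal_l, RInt_Rpower by (lra || (intros; apply continuous_Rpower; lra)).
  apply Rmult_le_compat_l; [lra |]. pose proof (Rpower_pos a p).
  unfold Rdiv. apply Rmult_le_compat_r; [left; now apply Rinv_0_lt_compat | lra].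
Qed.

Lemma incbeta_integral_sup x p q : 0 < x < 1 -> 0 < p ->
  (forall a, 0 < a -> a <= x -> RInt (beta_integrand p q) a x <= incbeta_integral x p q) /\
  (forall e, 0 < e ->
     exists a, 0 < a /\ a <= x /\ incbeta_integral x p q - e < RInt (beta_integrand p q) a x).
Proof.
intros Hx Hp. destruct (RInt_beta_integrand_bounded x p q Hx Hp) as [M HM].
destruct (is_RInt_gen_sup (beta_integrand p q) (at_right 0) (at_point x)
  (fun a b => 0 < a /\ a <= x /\ b = x) M) as [L [HL [Hle Happ]]].
- exists x, x. lra.
- intros a b [Ha [Hax ->]]. apply ex_RInt_continuous_le; [exact Hax |].
  intros; apply continuous_beta_integrand; lra.
- intros a b [Ha [Hax ->]]. now apply HM.
- intros a b [Ha [Hax ->]].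
  apply (Filter_prod _ _ _ (fun u => 0 < u /\ u <= a) (fun v => v = x));
    [now apply at_right_0_interval | reflexivity |].
  intros u v Hu ->. simpl. split; [lra |].
  apply RInt_subinterval_le; try lra.
  + intros; apply continuous_beta_integrand; lra.
  + intros; left; apply beta_integrand_pos.
- replace (incbeta_integral x p q) with L by (symmetry; exact (is_RInt_gen_unique _ _ HL)).
  split; [intros a Ha Hax; now apply (Hle a x) |].
  intros e He. destruct (Happ e He) as [a [b [[Ha [Hax ->]] Hlt]]]. now exists a.
Qed.

(** * Comparison of the incomplete beta integral with Beta *)

(* The integrand [gamma_integrand (p + q) r * beta_integrand p q u] after the
   substitution [r = t / (1 - u)]. *)
Definition beta_gamma_kernel (p q t u : R) : R :=
  / (1 - u) * (gamma_integrand (p + q) (t / (1 - u)) * beta_integrand p q u).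

Lemma beta_gamma_kernel_pos p q t u : u < 1 -> 0 < beta_gamma_kernel p q t u.
Proof.
intros Hu. apply Rmult_lt_0_compat; [apply Rinv_0_lt_compat; lra |].
apply Rmult_lt_0_compat; [apply gamma_integrand_pos | apply beta_integrand_pos].
Qed.

Lemma continuity_2d_pt_beta_gamma_kernel p q t u : 0 < t -> 0 < u < 1 ->
  continuity_2d_pt (beta_gamma_kernel p q) t u.
Proof.
intros Ht Hu.
assert (Hinv : continuity_2d_pt (fun _ u => / (1 - u)) t u).
{ apply (continuity_2d_pt_inv (fun _ u => 1 - u)); [| lra].
  apply (continuity_2d_pt_minus (fun _ _ => 1) (fun _ u => u));
    [apply continuity_2d_pt_const | apply continuity_2d_pt_id2]. }
apply (continuity_2d_pt_mult (fun _ u => / (1 - u))); [exact Hinv |].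
apply (continuity_2d_pt_mult (fun t u => gamma_integrand (p + q) (t / (1 - u)))).
- apply (continuity_1d_2d_pt_comp _ (fun t u => t / (1 - u))).
  + apply continuity_pt_filterlim, continuous_gamma_integrand, Rdiv_lt_0_compat; lra.
  + apply (continuity_2d_pt_mult (fun t _ => t)); [apply continuity_2d_pt_id1 | exact Hinv].
- apply (continuity_2d_pt_lift_r (beta_integrand p q)), continuous_beta_integrand. lra.
Qed.

Lemma beta_gamma_kernel_subst p q t s : 0 < t -> 0 < s ->
  t / (t + s) ^ 2 * beta_gamma_kernel p q t (s / (t + s))
  = gamma_integrand q t * gamma_integrand p s.
Proof.
intros Ht Hs. unfold beta_gamma_kernel, gamma_integrand, beta_integrand.
replace (1 - s / (t + s)) with (t / (t + s)) by (field; lra).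
replace (t / (t / (t + s))) with (t + s) by (field; lra).
unfold Rpower. rewrite !ln_div by lra.
assert (Hfactor : forall Z, t / (t + s) ^ 2 * (/ (t / (t + s)) * Z) = exp (- ln (t + s)) * Z).
{ intros Z. rewrite exp_Ropp, exp_ln by lra. field. lra. }
rewrite Hfactor, <- !exp_plus. f_equal. ring.
Qed.

Lemma RInt_gamma_beta_le_RInt_beta_gamma_kernel p q x eta T u :
  0 < x < 1 -> 0 < eta <= T -> 0 < u <= x ->
  RInt (fun r => gamma_integrand (p + q) r * beta_integrand p q u) eta T
  <= RInt (fun t => beta_gamma_kernel p q t u) (eta * (1 - x)) T.
Proof.
intros Hx Heta Hu. set (w := 1 - u). assert (Hw : 0 < w) by (unfold w; lra).
assert (E := RInt_comp (V := R_CompleteNormedModule)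
  (fun r => gamma_integrand (p + q) r * beta_integrand p q u)
  (fun t => t / w) (fun _ => / w) (eta * w) (T * w)).
cbv beta in E.
replace (eta * w / w) with eta in E by (field; lra).
replace (T * w / w) with T in E by (field; lra).
rewrite <- E.
- apply (RInt_subinterval_le (fun t => beta_gamma_kernel p q t u)).
  + unfold w. apply Rmult_le_compat_l; lra.
  + apply Rmult_le_compat_r; lra.
  + unfold w. nra.
  + intros t Ht. apply (continuity_2d_pt_continuous_l (beta_gamma_kernel p q) t u).
    apply continuity_2d_pt_beta_gamma_kernel; nra.
  + intros t _. left. apply beta_gamma_kernel_pos. lra.
- intros y Hy. rewrite Rmin_left in Hy by nra.
  apply (continuous_mult (fun r => gamma_integrand (p + q) r) (fun _ => beta_integrand p q u));
    [apply continuous_gamma_integrand, Rdiv_lt_0_compat; nra | apply continuous_const].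
- intros y _. split; [auto_derive; [easy | field; lra] | apply continuous_const].
Qed.

Lemma RInt_beta_gamma_kernel_le p q x eps t : 0 < p -> 0 < eps <= x -> x < 1 -> 0 < t ->
  RInt (fun u => beta_gamma_kernel p q t u) eps x <= Gamma p * gamma_integrand q t.
Proof.
intros Hp Heps Hx Ht.
set (s1 := t * eps / (1 - eps)). set (s2 := t * x / (1 - x)).
assert (Hs1 : 0 < s1) by (unfold s1; apply Rdiv_lt_0_compat; nra).
assert (Hs12 : s1 <= s2).
{ unfold s1, s2. apply (Rmult_le_reg_r ((1 - eps) * (1 - x))); [nra |].
  field_simplify; [nra | lra | lra]. }
assert (E := RInt_comp (V := R_CompleteNormedModule) (fun u => beta_gamma_kernel p q t u)
  (fun s => s / (t + s)) (fun s => t / (t + s) ^ 2) s1 s2).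
cbv beta in E.
replace (s1 / (t + s1)) with eps in E by (unfold s1; field; lra).
replace (s2 / (t + s2)) with x in E by (unfold s2; field; lra).
rewrite <- E.
- unfold scal; simpl; unfold mult; simpl.
  rewrite (RInt_ext_le _ (fun s => gamma_integrand q t * gamma_integrand p s) s1 s2 Hs12)
    by (intros; apply beta_gamma_kernel_subst; lra).
  rewrite RInt_scal_l by (lra || (intros; apply continuous_gamma_integrand; lra)).
  rewrite Rmult_comm. apply Rmult_le_compat_r; [left; apply gamma_integrand_pos |].
  apply Gamma_sup; lra.
- intros y Hy. rewrite Rmin_left, Rmax_right in Hy by lra.
  apply (continuity_2d_pt_continuous_r (beta_gamma_kernel p q) t).
  apply continuity_2d_pt_beta_gamma_kernel; [lra |]. split.
  + apply Rdiv_lt_0_compat; lra.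
  + apply (Rmult_lt_reg_r (t + y)); [lra |]. field_simplify; lra.
- intros y Hy. rewrite Rmin_left, Rmax_right in Hy by lra. split.
  + auto_derive; [lra | field; lra].
  + apply continuous_of_ex_derive. auto_derive. apply Rmult_integral_contrapositive; split; lra.
Qed.

Lemma RInt_gamma_mul_RInt_beta_le p q x eta T eps :
  0 < p -> 0 < q -> 0 < x < 1 -> 0 < eta <= T -> 0 < eps <= x ->
  RInt (gamma_integrand (p + q)) eta T * RInt (beta_integrand p q) eps x <= Gamma p * Gamma q.
Proof.
intros Hp Hq Hx Heta Heps.
set (eta' := eta * (1 - x)). assert (Heta' : 0 < eta' <= T) by (unfold eta'; nra).
assert (Hkernel : forall t u, eta' <= t <= T -> eps <= u <= x ->
  continuity_2d_pt (beta_gamma_kernel p q) t u)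
  by (intros; apply continuity_2d_pt_beta_gamma_kernel; lra).
assert (Hbeta : forall u, eps <= u <= x -> continuous (beta_integrand p q) u)
  by (intros; apply continuous_beta_integrand; lra).
assert (Hprod : RInt (gamma_integrand (p + q)) eta T * RInt (beta_integrand p q) eps x
  = RInt (fun u => RInt (fun r => gamma_integrand (p + q) r * beta_integrand p q u) eta T) eps x).
{ rewrite <- RInt_scal_l by (lra || exact Hbeta).
  apply RInt_ext_le; [lra |]. intros u _.
  rewrite (RInt_ext (fun r => gamma_integrand (p + q) r * beta_integrand p q u)
    (fun r => beta_integrand p q u * gamma_integrand (p + q) r)) by (intros; apply Rmult_comm).
  rewrite RInt_scal_l by (lra || (intros; apply continuous_gamma_integrand; lra)).
  apply Rmult_comm. }
rewrite Hprod.
apply Rle_trans with (RInt (fun u => RInt (fun t => beta_gamma_kernel p q t u) eta' T) eps x).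
{ apply RInt_le; [lra | | | intros; apply RInt_gamma_beta_le_RInt_beta_gamma_kernel; lra].
  - apply (ex_RInt_RInt_param_rect (fun r u => gamma_integrand (p + q) r * beta_integrand p q u));
      [lra | lra |].
    intros r u Hr Hu. apply (continuity_2d_pt_mult (fun r _ => gamma_integrand (p + q) r)).
    + apply (continuity_2d_pt_lift_l (gamma_integrand (p + q))), continuous_gamma_integrand. lra.
    + now apply (continuity_2d_pt_lift_r (beta_integrand p q)), Hbeta.
  - now apply (ex_RInt_RInt_param_rect (beta_gamma_kernel p q)); [lra | lra |]. }
rewrite <- (RInt_swap_rect (beta_gamma_kernel p q) eta' T eps x) by (lra || exact Hkernel).
apply Rle_trans with (RInt (fun t => Gamma p * gamma_integrand q t) eta' T).
{ apply RInt_le; [lra | | | intros; apply RInt_beta_gamma_kernel_le; lra].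
  - apply (ex_RInt_RInt_param_rect (fun u t => beta_gamma_kernel p q t u)); [lra | lra |].
    intros u t Hu Ht. apply (continuity_2d_pt_swap (beta_gamma_kernel p q) t u). now apply Hkernel.
  - apply ex_RInt_continuous_le; [lra |]. intros t Ht.
    apply (continuous_mult (fun _ => Gamma p)); [apply continuous_const |].
    apply continuous_gamma_integrand. lra. }
rewrite RInt_scal_l by (lra || (intros; apply continuous_gamma_integrand; lra)).
apply Rmult_le_compat_l; [left; now apply Gamma_pos | apply Gamma_sup; lra].
Qed.

Lemma incbeta_integral_mul_Gamma_le x p q : 0 < p -> 0 < q -> 0 < x < 1 ->
  incbeta_integral x p q * Gamma (p + q) <= Gamma p * Gamma q.
Proof.
intros Hp Hq Hx.
apply (Rmult_le_of_approx _ _ _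
  (fun u => exists eps, 0 < eps <= x /\ u = RInt (beta_integrand p q) eps x)
  (fun v => exists eta T, 0 < eta <= T /\ v = RInt (gamma_integrand (p + q)) eta T)).
- left. apply Gamma_pos. lra.
- intros e He. destruct (proj2 (incbeta_integral_sup x p q Hx Hp) e He) as [eps [Heps [Hepsx Hlt]]].
  exists (RInt (beta_integrand p q) eps x). split; [now exists eps |]. exact Hlt.
- intros e He. destruct (proj2 (Gamma_sup (p + q) ltac:(lra)) e He) as [eta [T [HT Hlt]]].
  exists (RInt (gamma_integrand (p + q)) eta T). split; [now exists eta, T |]. exact Hlt.
- intros u [eps [Heps ->]]. apply RInt_ge_0; [lra | |].
  + apply ex_RInt_continuous_le; [lra |]. intros; apply continuous_beta_integrand; lra.
  + intros; left; apply beta_integrand_pos.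
- intros v [eta [T [HT ->]]]. apply RInt_ge_0; [lra | |].
  + apply ex_RInt_continuous_le; [lra |]. intros; apply continuous_gamma_integrand; lra.
  + intros; left; apply gamma_integrand_pos.
- intros u v [eps [Heps ->]] [eta [T [HT ->]]]. rewrite Rmult_comm.
  now apply RInt_gamma_mul_RInt_beta_le.
Qed.

Lemma incbeta_integral_nonneg x p q : 0 < x < 1 -> 0 < p -> 0 <= incbeta_integral x p q.
Proof.
intros Hx Hp. eapply Rle_trans; [| apply (proj1 (incbeta_integral_sup x p q Hx Hp) x); lra].
rewrite RInt_point. now right.
Qed.

Lemma incbeta_integral_add_RInt_le x x' p q : 0 < x <= x' -> x' < 1 -> 0 < p ->
  incbeta_integral x p q + RInt (beta_integrand p q) x x' <= incbeta_integral x' p q.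
Proof.
intros Hx Hx' Hp. apply Rle_plus_epsilon. intros e He.
destruct (incbeta_integral_sup x p q ltac:(lra) Hp) as [_ Happ].
destruct (Happ e He) as [a [Ha [Hax Hlt]]].
apply Rle_trans with (RInt (beta_integrand p q) a x' + e).
2: { apply Rplus_le_compat_r, (proj1 (incbeta_integral_sup x' p q ltac:(lra) Hp)); lra. }
rewrite <- (RInt_Chasles (V := R_CompleteNormedModule) _ a x x')
  by (apply ex_RInt_continuous_le; [lra | intros; apply continuous_beta_integrand; lra]).
unfold plus; simpl. lra.
Qed.

Lemma Ireg_bounds x p q : 0 < p -> 0 < q -> 0 < x < 1 -> 0 <= Ireg x p q < 1.
Proof.
intros Hp Hq Hx.
change (Ireg x p q) with (incbeta_integral x p q / Beta p q).
assert (HGpq := Gamma_pos (p + q) ltac:(lra)).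
assert (HB : 0 < Beta p q).
{ pose proof (Gamma_pos p Hp). pose proof (Gamma_pos q Hq). apply Rdiv_lt_0_compat; nra. }
set (x' := (1 + x) / 2). assert (Hx' : x < x' < 1) by (unfold x'; lra).
assert (Hgap : 0 < RInt (beta_integrand p q) x x').
{ apply RInt_gt_0; [lra | intros; apply beta_integrand_pos |].
  intros; apply continuous_beta_integrand; lra. }
pose proof (incbeta_integral_add_RInt_le x x' p q ltac:(lra) ltac:(lra) Hp) as Hmono.
pose proof (incbeta_integral_mul_Gamma_le x' p q Hp Hq ltac:(lra)) as Hle.
assert (Hlt : incbeta_integral x p q < Beta p q).
{ apply (Rmult_lt_reg_r (Gamma (p + q))); [exact HGpq |].
  unfold Beta, Rdiv. rewrite Rmult_assoc, Rinv_l by lra. nra. }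
split.
- apply Rdiv_le_0_compat; [now apply incbeta_integral_nonneg | exact HB].
- apply (Rmult_lt_reg_r (Beta p q)); [exact HB |].
  unfold Rdiv. rewrite Rmult_assoc, Rinv_l by lra. lra.
Qed.

(** * Finite sums and double series *)

Lemma fsum_ext n f g : (forall k, (k < n)%nat -> f k = g k) -> fsum n f = fsum n g.
Proof.
induction n as [| n IH]; intros H; simpl; [reflexivity |].
rewrite IH, H; [reflexivity | lia | intros; apply H; lia].
Qed.

Lemma fsum_plus n f g : fsum n (fun k => f k + g k) = fsum n f + fsum n g.
Proof. induction n as [| n IH]; simpl; [ring | rewrite IH; ring]. Qed.

Lemma fsum_minus n f g : fsum n (fun k => f k - g k) = fsum n f - fsum n g.
Proof. induction n as [| n IH]; simpl; [ring | rewrite IH; ring]. Qed.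

Lemma fsum_scal n c f : fsum n (fun k => c * f k) = c * fsum n f.
Proof. induction n as [| n IH]; simpl; [ring | rewrite IH; ring]. Qed.

Lemma fsum_const n c : fsum n (fun _ => c) = INR n * c.
Proof. induction n as [| n IH]; simpl fsum; [simpl; ring | rewrite IH, S_INR; ring]. Qed.

Lemma fsum_le n f g : (forall k, (k < n)%nat -> f k <= g k) -> fsum n f <= fsum n g.
Proof.
induction n as [| n IH]; intros H; simpl; [lra |].
apply Rplus_le_compat; [apply IH; intros; apply H | apply H]; lia.
Qed.

Lemma fsum_lt n f g : (0 < n)%nat -> (forall k, (k < n)%nat -> f k < g k) ->
  fsum n f < fsum n g.
Proof.
destruct n as [| n]; intros Hn H; [lia |]. simpl.
apply Rplus_le_lt_compat; [apply fsum_le; intros; apply Rlt_le, H | apply H]; lia.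
Qed.

Lemma fsum_le_of_length_le n n' f : (n <= n')%nat -> (forall k, 0 <= f k) ->
  fsum n f <= fsum n' f.
Proof. intros Hn Hf. induction Hn as [| n' _ IH]; simpl; [lra |]. pose proof (Hf n'). lra. Qed.

Lemma fsum_swap n n' (c : nat -> nat -> R) :
  fsum n (fun j => fsum n' (fun l => c j l)) = fsum n' (fun l => fsum n (fun j => c j l)).
Proof.
induction n as [| n IH]; simpl.
- induction n' as [| n' IH']; simpl; [reflexivity | rewrite <- IH'; ring].
- now rewrite IH, <- fsum_plus.
Qed.

Lemma fsum_S_sum_f_R0 n f : fsum (S n) f = sum_f_R0 f n.
Proof. induction n as [| n IH]; simpl in *; [ring | now rewrite <- IH]. Qed.

Lemma Series_nonneg a : (forall k, 0 <= a k) -> ex_series a -> 0 <= Series a.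
Proof.
intros Ha Hex. replace 0 with (Series (fun _ => 0)).
- apply Series_le; [intros; split; [lra | apply Ha] | exact Hex].
- rewrite (Series_ext _ (fun k => 0 * a k)), Series_scal_l by (intros; ring). ring.
Qed.

Lemma fsum_le_Series n a : (forall k, 0 <= a k) -> ex_series a -> fsum n a <= Series a.
Proof.
intros Ha Hex. destruct n as [| n]; [simpl; now apply Series_nonneg |].
rewrite (Series_incr_n a (S n)), fsum_S_sum_f_R0 by (lia || exact Hex). simpl pred.
enough (0 <= Series (fun k => a (S n + k)%nat)) by lra.
apply Series_nonneg; [intros; apply Ha | now apply (ex_series_incr_n a (S n))].
Qed.

Fixpoint max_below (m : nat -> nat) (n : nat) : nat :=
  match n with O => O | S n' => Nat.max (max_below m n') (m n') end.

Lemma le_max_below m n k : (k < n)%nat -> (m k <= max_below m n)%nat.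
Proof.
induction n as [| n IH]; simpl; intros Hk; [lia |].
destruct (Nat.eq_dec k n) as [-> | Hne]; [lia |]. specialize (IH ltac:(lia)). lia.
Qed.

(* Every truncation misses the positive term [c 0 l1]. *)
Lemma fsum_trunc_lt_Series_Series (c : nat -> nat -> R) l1 (m : nat -> nat) :
  (forall j l, 0 < c j l) -> (forall j, ex_series (c j)) -> ex_series (fun j => Series (c j)) ->
  fsum l1 (fun l => fsum (m l) (fun j => c j l)) < Series (fun j => Series (c j)).
Proof.
intros Hc Hex Hex'. set (J := S (max_below m l1)).
assert (Hc0 : forall j l, 0 <= c j l) by (intros; now apply Rlt_le).
apply Rle_lt_trans with (fsum J (fun j => fsum l1 (fun l => c j l))).
{ rewrite fsum_swap. apply fsum_le. intros l Hl. apply fsum_le_of_length_le; [| intros; apply Hc0].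
  pose proof (le_max_below m l1 l Hl). unfold J. lia. }
apply Rlt_le_trans with (fsum J (fun j => fsum (S l1) (fun l => c j l))).
{ apply fsum_lt; [unfold J; lia |]. intros j _. simpl. pose proof (Hc j l1). lra. }
apply Rle_trans with (fsum J (fun j => Series (c j))).
{ apply fsum_le. intros j _. now apply fsum_le_Series. }
apply fsum_le_Series; [| exact Hex']. intros j. now apply Series_nonneg.
Qed.

Lemma Series_Series_trunc_lt (w L : nat -> nat -> R) l1 (m : nat -> nat) :
  (forall j l, 0 <= L j l < w j l) ->
  (forall j, ex_series (w j)) -> ex_series (fun j => Series (w j)) ->
  Series (fun j => Series (L j)) - fsum l1 (fun l => fsum (m l) (fun j => L j l))
  < Series (fun j => Series (w j)) - fsum l1 (fun l => fsum (m l) (fun j => w j l)).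
Proof.
intros HLw Hw Hw'.
set (c j l := w j l - L j l).
assert (HL : forall j, ex_series (L j)).
{ intros j. apply (ex_series_le (V := R_CompleteNormedModule) _ (w j)); [| apply Hw].
  intros l. unfold norm; simpl. specialize (HLw j l). rewrite Rabs_pos_eq; lra. }
assert (Hc : forall j, ex_series (c j))
  by (intros; now apply (ex_series_minus (V := R_NormedModule))).
assert (Hc0 : forall j l, 0 < c j l) by (intros j l; specialize (HLw j l); unfold c; lra).
assert (HSc : forall j, Series (c j) = Series (w j) - Series (L j))
  by (intros; now apply Series_minus).
assert (HSL : forall j, 0 <= Series (L j) <= Series (w j)).
{ intros j. pose proof (Series_nonneg (c j) (fun l => Rlt_le _ _ (Hc0 j l)) (Hc j)).
  pose proof (Series_nonneg (L j) (fun l => proj1 (HLw j l)) (HL j)). rewrite HSc in *. lra. }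
assert (HL' : ex_series (fun j => Series (L j))).
{ apply (ex_series_le (V := R_CompleteNormedModule) _ (fun j => Series (w j))); [| exact Hw'].
  intros j. unfold norm; simpl. rewrite Rabs_pos_eq; apply HSL. }
assert (Hc' : ex_series (fun j => Series (c j))).
{ apply (ex_series_ext (fun j => Series (w j) - Series (L j))); [intros; now rewrite HSc |].
  now apply (ex_series_minus (V := R_NormedModule)). }
assert (Htrunc := fsum_trunc_lt_Series_Series c l1 m Hc0 Hc Hc').
rewrite (Series_ext _ _ HSc), Series_minus in Htrunc by assumption.
replace (fsum l1 (fun l => fsum (m l) (fun j => c j l)))
  with (fsum l1 (fun l => fsum (m l) (fun j => w j l))
        - fsum l1 (fun l => fsum (m l) (fun j => L j l))) in Htrunc
  by (rewrite <- fsum_minus; apply fsum_ext; intros; unfold c; now rewrite <- fsum_minus).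
lra.
Qed.

(** * Poisson weights *)

Definition poisson_pmf (d : R) (k : nat) : R := exp (- d) * (d ^ k / INR (fact k)).

Lemma poisson_pmf_pos d k : 0 < d -> 0 < poisson_pmf d k.
Proof.
intros Hd. apply Rmult_lt_0_compat; [apply exp_pos |].
apply Rdiv_lt_0_compat; [now apply pow_lt | apply lt_0_INR, lt_O_fact].
Qed.

Lemma is_series_poisson_pmf d : is_series (poisson_pmf d) 1.
Proof.
replace 1 with (exp (- d) * exp d) by (rewrite <- exp_plus, Rplus_opp_l; apply exp_0).
apply (is_series_scal_l (V := R_NormedModule)).
eapply is_series_ext; [| apply (is_exp_Reals d)].
intros n. unfold scal; simpl; unfold mult; simpl. rewrite pow_n_pow. unfold Rdiv. ring.
Qed.

Lemma fsum_poisson_pmf d n :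
  exp (- d) * fsum n (fun k => d ^ k / INR (fact k)) = fsum n (poisson_pmf d).
Proof. now rewrite <- fsum_scal. Qed.

Lemma exp_opp_plus_mul_div_fact d1 d2 j l :
  exp (- (d1 + d2)) * (d1 ^ j * d2 ^ l) / (INR (fact j) * INR (fact l))
  = poisson_pmf d1 j * poisson_pmf d2 l.
Proof.
unfold poisson_pmf. replace (- (d1 + d2)) with (- d1 + - d2) by ring. rewrite exp_plus.
field. split; apply not_0_INR, fact_neq_0.
Qed.

Lemma exp_opp_plus_fsum_mul_fsum d1 d2 l1 (m : nat -> nat) :
  exp (- (d1 + d2)) *
    fsum l1 (fun l => d2 ^ l / INR (fact l) * fsum (m l) (fun j => d1 ^ j / INR (fact j)))
  = fsum l1 (fun l => poisson_pmf d2 l * fsum (m l) (poisson_pmf d1)).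
Proof.
rewrite <- fsum_scal. apply fsum_ext. intros l _.
rewrite <- fsum_poisson_pmf. unfold poisson_pmf.
replace (- (d1 + d2)) with (- d2 + - d1) by ring. rewrite exp_plus. ring.
Qed.

Lemma dncbeta_cdf_sub_trunc_lt a b d1 d2 x l1 (m : nat -> nat) :
  0 < a -> 0 < b -> 0 < d1 -> 0 < d2 -> 0 < x < 1 ->
  dncbeta_cdf a b d1 d2 x - fsum l1 (fun l => fsum (m l) (fun j => Lterm a b d1 d2 x j l))
  < 1 - fsum l1 (fun l => poisson_pmf d2 l * fsum (m l) (poisson_pmf d1)).
Proof.
intros Ha Hb Hd1 Hd2 Hx.
set (w j l := poisson_pmf d1 j * poisson_pmf d2 l).
assert (Hw : forall j, is_series (w j) (poisson_pmf d1 j)).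
{ intros j. rewrite <- (Rmult_1_r (poisson_pmf d1 j)).
  apply (is_series_scal_l (V := R_NormedModule)), is_series_poisson_pmf. }
assert (HSw : is_series (fun j => Series (w j)) 1).
{ eapply is_series_ext; [| apply is_series_poisson_pmf].
  intros j. symmetry. now apply is_series_unique. }
rewrite <- (is_series_unique _ _ HSw).
rewrite (fsum_ext l1 (fun l => poisson_pmf d2 l * fsum (m l) (poisson_pmf d1))
  (fun l => fsum (m l) (fun j => w j l)))
  by (intros l _; rewrite <- fsum_scal; apply fsum_ext; intros; unfold w; ring).
apply Series_Series_trunc_lt; [| intros j; eexists; apply Hw | eexists; exact HSw].
intros j l. unfold Lterm. rewrite exp_opp_plus_mul_div_fact.
pose proof (Ireg_bounds x (INR j + a) (INR l + b)
  ltac:(pose proof (pos_INR j); lra) ltac:(pose proof (pos_INR l); lra) Hx).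
change (poisson_pmf d1 j * poisson_pmf d2 l) with (w j l).
assert (0 < w j l) by (apply Rmult_lt_0_compat; now apply poisson_pmf_pos).
nra.
Qed.

Lemma one_sub_fsum_mul_fsum_lt (P1 P2 : nat -> R) l1 (m : nat -> nat) e1 e2 :
  (0 < l1)%nat ->
  1 - fsum l1 P2 < e1 ->
  (forall l, (l < l1)%nat -> P2 l * (1 - fsum (m l) P1) < e2) ->
  1 - fsum l1 (fun l => P2 l * fsum (m l) P1) < e1 + INR l1 * e2.
Proof.
intros Hl1 Htail2 Htail1.
assert (Hweighted : fsum l1 (fun l => P2 l * (1 - fsum (m l) P1)) < INR l1 * e2)
  by (rewrite <- fsum_const; now apply fsum_lt).
rewrite (fsum_ext l1 (fun l => P2 l * (1 - fsum (m l) P1))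
  (fun l => P2 l - P2 l * fsum (m l) P1)), fsum_minus in Hweighted by (intros; ring).
lra.
Qed.

Theorem mainTheorem4 (a b d1 d2 x e21 e22 : R) (l1 : nat) (m : nat -> nat) :
  0 < a -> 0 < b -> 0 < d1 -> 0 < d2 -> 0 < x < 1 -> 0 < e21 -> 0 < e22 ->
  (0 < l1)%nat ->
  1 - exp (- d2) * fsum l1 (fun l => d2 ^ l / INR (fact l)) < e21 ->
  (forall l : nat, (l < l1)%nat ->
     exp (- d2) * (d2 ^ l / INR (fact l))
       * (1 - exp (- d1) * fsum (m l) (fun j => d1 ^ j / INR (fact j))) < e22) ->
  let Bhat := fsum l1 (fun l => fsum (m l) (fun j => Lterm a b d1 d2 x j l)) in
  let U2 := 1 - exp (- (d1 + d2)) *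
              fsum l1 (fun l => d2 ^ l / INR (fact l) *
                                 fsum (m l) (fun j => d1 ^ j / INR (fact j))) in
  dncbeta_cdf a b d1 d2 x - Bhat < U2 /\ U2 < e21 + INR l1 * e22.
Proof.
intros Ha Hb Hd1 Hd2 Hx _ _ Hl1 Htail2 Htail1 Bhat U2.
unfold U2, Bhat. rewrite exp_opp_plus_fsum_mul_fsum. split.
- now apply dncbeta_cdf_sub_trunc_lt.
- apply one_sub_fsum_mul_fsum_lt; [exact Hl1 | now rewrite <- fsum_poisson_pmf |].
  intros l Hl. rewrite <- fsum_poisson_pmf. exact (Htail1 l Hl).
Qed.
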